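(* Let $\Phi \in \mathbb{R}^{M \times N}$, let $\Lambda \subset \{1, 2, \dots, N\}$, and let $\widetilde{x} \in \mathbb{R}^N$ with $\mathrm{supp}(\widetilde{x}) \cap \Lambda = \emptyset$. Define $h = A_\Lambda^T A_\Lambda \widetilde{x}$. If $\Phi$ satisfies the restricted isometry property of order $\|\widetilde{x}\|_0 + |\Lambda| + 1$ with isometry constant $\delta$, then $$|h(j) - \widetilde{x}(j)| \le \frac{\delta}{1-\delta}\|\widetilde{x}\|_2$$ for all $j \notin \Lambda$.
   Context: For $x \in \mathbb{R}^N$, $\|x\|_0 := |\mathrm{supp}(x)|$. A matrix $\Phi \in \mathbb{R}^{M\times N}$ satisfies the restricted isometry property (RIP) of order $K$ with isometry constant $\delta \in (0,1)$ if $(1-\delta)\|x\|_2^2 \le \|\Phi x\|_2^2 \le (1+\delta)\|x\|_2^2$ for all $x \in \mathbb{R}^N$ with $\|x\|_0 \le K$. For $\Lambda \subset \{1,\dots,N\}$, $\Phi_\Lambda$ is the submatrix of $\Phi$ consisting of the columns indexed by $\Lambda$, $P_\Lambda$ is the orthogonal projection onto the column space of $\Phi_\Lambda$, $P_\Lambda^\perp = I - P_\Lambda$, and $A_\Lambda := P_\Lambda^\perp \Phi$. *)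

From HB Require Import structures.
From mathcomp Require Import all_boot all_order all_algebra.
Set Implicit Arguments. Unset Strict Implicit. Unset Printing Implicit Defensive.
Import Order.TTheory GRing.Theory Num.Theory.
Local Open Scope ring_scope.

Section Defs.
Variable R : rcfType.

Definition supp (N : nat) (x : 'cV[R]_N) : {set 'I_N} := [set j | x j 0 != 0].
Definition l0 (N : nat) (x : 'cV[R]_N) : nat := #|supp x|.

Definition sqnorm2 (n : nat) (x : 'cV[R]_n) : R := \sum_(i < n) (x i 0) ^+ 2.
Definition norm2 (n : nat) (x : 'cV[R]_n) : R := Num.sqrt (sqnorm2 x).

Definition RIP (M N : nat) (Phi : 'M[R]_(M, N)) (K : nat) (delta : R) : Prop :=
  0 < delta < 1 /\
  forall x : 'cV[R]_N, (l0 x <= K)%N ->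
    (1 - delta) * sqnorm2 x <= sqnorm2 (Phi *m x) /\
    sqnorm2 (Phi *m x) <= (1 + delta) * sqnorm2 x.

(* Phi_Lambda: the submatrix of the columns of Phi indexed by Lambda
   (in increasing order of the indices) *)
Definition subcols (M N : nat) (Phi : 'M[R]_(M, N)) (L : {set 'I_N})
  : 'M[R]_(M, #|L|) := colsub (fun k : 'I_#|L| => enum_val k) Phi.

(* P is the orthogonal projection of R^M onto the column space of A:
   P is symmetric, idempotent, and its column space equals that of A
   (column spaces are compared as row spaces of the transposes). *)
Definition is_orth_proj (M k : nat) (P : 'M[R]_M) (A : 'M[R]_(M, k)) : Prop :=
  P^T = P /\ P *m P = P /\ (P^T == A^T)%MS.

End Defs.

From HB Require Import structures.
From mathcomp Require Import all_boot all_order all_algebra.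
From mathcomp Require Import ring lra.
Import Order.TTheory GRing.Theory Num.Theory.
Local Open Scope ring_scope.

(* Write G := A_Λ^T A_Λ - I, so that h(j) - x(j) = <G x, e_j>.  By polarization
   it suffices to bound the quadratic form <G w, w> on vectors w supported
   outside Λ with |supp w| <= ||x||_0 + 1.  For such w, ||A_Λ w||^2 =
   ||Φ w||^2 - ||P Φ w||^2, and P Φ w = Φ z with supp z ⊆ Λ; since w ⟂ z,
   ||P Φ w||^2 = <(Φ^T Φ - I) w, z> <= δ ||w|| ||z||, while RIP on z gives
   (1 - δ) ||z||^2 <= ||P Φ w||^2.  Together ||P Φ w||^2 <= δ^2/(1-δ) ||w||^2,
   and RIP on w then yields |<G w, w>| <= δ/(1-δ) ||w||^2. *)

Set Implicit Arguments.
Unset Strict Implicit.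

Section BilinearForm.
Variable R : rcfType.

Definition bform n (D : 'M[R]_n) (u v : 'cV[R]_n) : R := (u^T *m D *m v) 0 0.

Lemma sqnorm2E n (x : 'cV[R]_n) : sqnorm2 x = bform 1%:M x x.
Proof. by rewrite /bform mulmx1 mxE; apply: eq_bigr => i _; rewrite !mxE expr2. Qed.

Lemma sqnorm2_ge0 n (x : 'cV[R]_n) : 0 <= sqnorm2 x.
Proof. by apply: sumr_ge0 => i _; apply: sqr_ge0. Qed.

Lemma sqnorm2_eq0 n (x : 'cV[R]_n) : (sqnorm2 x == 0) = (x == 0).
Proof.
apply/idP/eqP => [|->]; last by rewrite /sqnorm2 big1 // => i _; rewrite mxE expr0n.
rewrite psumr_eq0 => [/allP x0|i _]; last exact: sqr_ge0.
apply/matrixP => i j; rewrite (ord1 j) mxE.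
by have := x0 i (mem_index_enum i); rewrite sqrf_eq0 => /eqP.
Qed.

Lemma sqr_norm2 n (x : 'cV[R]_n) : norm2 x ^+ 2 = sqnorm2 x.
Proof. by rewrite sqr_sqrtr // sqnorm2_ge0. Qed.

Lemma norm2_gt0 n (x : 'cV[R]_n) : (0 < norm2 x) = (x != 0).
Proof. by rewrite sqrtr_gt0 lt_def sqnorm2_eq0 sqnorm2_ge0 andbT. Qed.

Section Linearity.
Variables (n : nat) (D : 'M[R]_n).

Lemma bformDl u v w : bform D (u + v) w = bform D u w + bform D v w.
Proof. by rewrite /bform linearD /= !mulmxDl mxE. Qed.

Lemma bformDr u v w : bform D w (u + v) = bform D w u + bform D w v.
Proof. by rewrite /bform !mulmxDr mxE. Qed.

Lemma bformZl a u w : bform D (a *: u) w = a * bform D u w.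
Proof. by rewrite /bform linearZ /= -!scalemxAl mxE. Qed.

Lemma bformZr a u w : bform D w (a *: u) = a * bform D w u.
Proof. by rewrite /bform -!scalemxAr mxE. Qed.

Lemma bform0l w : bform D 0 w = 0.
Proof. by rewrite /bform trmx0 !mul0mx mxE. Qed.

Lemma bform0r w : bform D w 0 = 0.
Proof. by rewrite /bform mulmx0 mxE. Qed.

Lemma bformC : D^T = D -> forall u v, bform D u v = bform D v u.
Proof.
move=> sD u v; rewrite /bform; transitivity ((u^T *m D *m v)^T 0 0).
  by rewrite [RHS]mxE.
by rewrite !trmx_mul trmxK sD mulmxA.
Qed.

Lemma bform_expand u v t : D^T = D ->
  bform D (u + t *: v) (u + t *: v)
    = bform D u u + 2 * t * bform D u v + t ^+ 2 * bform D v v.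
Proof.
by move=> sD; rewrite !(bformDl, bformDr, bformZl, bformZr) (bformC sD v u); ring.
Qed.

End Linearity.

Lemma bformBmx n (D1 D2 : 'M[R]_n) u w :
  bform (D1 - D2) u w = bform D1 u w - bform D2 u w.
Proof. by rewrite /bform mulmxBr mulmxBl !mxE. Qed.

Lemma bform_gram m n (A : 'M[R]_(m, n)) u v :
  bform (A^T *m A) u v = bform 1%:M (A *m u) (A *m v).
Proof. by rewrite /bform mulmx1 trmx_mul !mulmxA. Qed.

Lemma gram_sub1_sym m n (A : 'M[R]_(m, n)) :
  (A^T *m A - 1%:M)^T = A^T *m A - 1%:M.
Proof. by rewrite linearB /= trmx_mul trmxK trmx1. Qed.

(* With t = ||u|| / ||v||: Q(u + t v) - Q(u - t v) = 4 t B(u, v) while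
   ||u + t v||^2 + ||u - t v||^2 = 4 ||u||^2. *)
Lemma bform_polar_bound n (D : 'M[R]_n) (u v : 'cV[R]_n) (c : R) :
  D^T = D -> 0 <= c ->
  (forall t, `|bform D (u + t *: v) (u + t *: v)| <= c * sqnorm2 (u + t *: v)) ->
  `|bform D u v| <= c * norm2 u * norm2 v.
Proof.
move=> sD c0 hQ.
have [->|u0] := eqVneq u 0; first by rewrite bform0l normr0 !mulr_ge0 ?sqrtr_ge0.
have [->|v0] := eqVneq v 0; first by rewrite bform0r normr0 !mulr_ge0 ?sqrtr_ge0.
have nu : 0 < norm2 u by rewrite norm2_gt0.
have nv : 0 < norm2 v by rewrite norm2_gt0.
pose t := norm2 u / norm2 v.
have t0 : 0 < t by rewrite divr_gt0.
have tv : t * norm2 v = norm2 u by rewrite divfK // gt_eqF.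
have t2v : t ^+ 2 * sqnorm2 v = sqnorm2 u by rewrite -!sqr_norm2 -tv; ring.
have diffQ : bform D (u + t *: v) (u + t *: v) - bform D (u + - t *: v) (u + - t *: v)
    = 4 * t * bform D u v by rewrite !bform_expand //; ring.
have sumN : sqnorm2 (u + t *: v) + sqnorm2 (u + - t *: v) = 4 * sqnorm2 u.
  by rewrite !sqnorm2E !bform_expand ?trmx1 // -!sqnorm2E sqrrN t2v; ring.
have : `|4 * t * bform D u v| <= 4 * c * sqnorm2 u.
  rewrite -diffQ; apply: le_trans (ler_normB _ _) _.
  by apply: le_trans (lerD (hQ t) (hQ (- t))) _; rewrite -mulrDr sumN mulrCA mulrA.
have t4 : 0 <= 4 * t by rewrite mulr_ge0 // ltW.
rewrite normrM (ger0_norm t4) -sqr_norm2 -tv => hB.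
by rewrite -(ler_pM2l t0); nra.
Qed.

End BilinearForm.

Section Supports.
Variable R : rcfType.

Lemma supp_addZ n (u v : 'cV[R]_n) t : supp (u + t *: v) \subset supp u :|: supp v.
Proof.
apply/subsetP => i; rewrite !inE !mxE; apply: contraR.
by rewrite negb_or !negbK => /andP[/eqP -> /eqP ->]; rewrite mulr0 addr0.
Qed.

Lemma bform1_disjoint n (u v : 'cV[R]_n) :
  [disjoint supp u & supp v] -> bform 1%:M u v = 0.
Proof.
move=> uv; rewrite /bform mulmx1 mxE big1 // => i _; rewrite mxE.
have [iu|iu] := boolP (i \in supp u).
  by move: (disjointFr uv iu); rewrite inE => /negbFE/eqP ->; rewrite mulr0.
by move: iu; rewrite inE negbK => /eqP ->; rewrite mul0r.
Qed.

Definition select_mx N (L : {set 'I_N}) : 'M[R]_(N, #|L|) :=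
  colsub (fun k : 'I_#|L| => enum_val k) 1%:M.

Lemma subcolsE M N (Phi : 'M[R]_(M, N)) L : subcols Phi L = Phi *m select_mx L.
Proof. by rewrite /select_mx mulmx_colsub mulmx1. Qed.

Lemma supp_select N (L : {set 'I_N}) (v : 'cV[R]_#|L|) :
  supp (select_mx L *m v) \subset L.
Proof.
apply/subsetP => i; rewrite inE mxE; apply: contraR => iL; rewrite big1 // => k _.
rewrite !mxE; case: eqP => [ik|]; last by rewrite mul0r.
by move: iL; rewrite ik enum_valP.
Qed.

End Supports.
Arguments select_mx {R N}.

Section RestrictedIsometry.
Variables (R : rcfType) (M N : nat) (Phi : 'M[R]_(M, N)) (K : nat) (delta : R).
Hypothesis rip : RIP Phi K delta.

Lemma RIP_bform_le (w : 'cV[R]_N) : (l0 w <= K)%N ->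
  `|bform (Phi^T *m Phi - 1%:M) w w| <= delta * sqnorm2 w.
Proof.
have [_ ripK] := rip; move=> /ripK[lo hi].
by rewrite bformBmx bform_gram -!sqnorm2E ler_norml; apply/andP; split; lra.
Qed.

Variables (L : {set 'I_N}) (P : 'M[R]_M).
Hypothesis projP : is_orth_proj P (subcols Phi L).

Lemma orth_proj_range y : exists2 z, supp z \subset L & P *m y = Phi *m z.
Proof.
have [_ [_ /andP[/submxP[D PD] _]]] := projP.
exists (select_mx L *m (D^T *m y)); first exact: supp_select.
by rewrite -[P]trmxK PD trmx_mul trmxK subcolsE !mulmxA.
Qed.

Lemma sqnorm2_orth_projC y :
  sqnorm2 ((1%:M - P) *m y) = sqnorm2 y - sqnorm2 (P *m y).
Proof.
have [PT [PP _]] := projP.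
have compl : (1%:M - P)^T *m (1%:M - P) = 1%:M - P.
  rewrite (raddfB (@trmx R M M)) /= tr_scalar_mx PT.
  by rewrite mulmxBl mul1mx mulmxBr mulmx1 PP subrr subr0.
by rewrite !sqnorm2E -!bform_gram compl PT PP bformBmx -sqnorm2E.
Qed.

Variable S : {set 'I_N}.
Hypotheses (SL : [disjoint S & L]) (card_SL : (#|S| + #|L| <= K)%N).

Lemma l0_le_support (w : 'cV[R]_N) : supp w \subset S :|: L -> (l0 w <= K)%N.
Proof.
move=> sw; apply: leq_trans card_SL; apply: leq_trans (leq_card_setU S L).
exact: subset_leq_card.
Qed.

Lemma sqnorm2_proj_le (w : 'cV[R]_N) : supp w \subset S ->
  (1 - delta) * sqnorm2 (P *m (Phi *m w)) <= delta ^+ 2 * sqnorm2 w.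
Proof.
move=> sw; have [/andP[d0 d1] ripK] := rip.
have [z sz Pw] := orth_proj_range (Phi *m w).
have wz : [disjoint supp w & supp z] := disjointW sw sz SL.
have projE : sqnorm2 (P *m (Phi *m w)) = bform (Phi^T *m Phi - 1%:M) w z.
  have [PT [PP _]] := projP.
  rewrite bformBmx bform1_disjoint // subr0 bform_gram -Pw sqnorm2E.
  by rewrite -bform_gram PT PP /bform mulmx1 -mulmxA.
have cross : `|bform (Phi^T *m Phi - 1%:M) w z| <= delta * norm2 w * norm2 z.
  apply: bform_polar_bound; [exact: gram_sub1_sym | exact: ltW |] => t.
  apply/RIP_bform_le/l0_le_support.
  exact: subset_trans (supp_addZ w z t) (setUSS sw sz).
have [lo_z _] := ripK z (l0_le_support (subset_trans sz (subsetUr S L))).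
rewrite -Pw -sqr_norm2 in lo_z.
rewrite -projE ger0_norm ?sqnorm2_ge0 // in cross.
have p0 := sqnorm2_ge0 (P *m (Phi *m w)).
have nw0 : 0 <= norm2 w := sqrtr_ge0 _.
rewrite -(sqr_norm2 w); have [z0|z_neq0] := eqVneq (norm2 z) 0.
  by rewrite z0 mulr0 in cross; nra.
have z_gt0 : 0 < norm2 z by rewrite lt_def z_neq0 sqrtr_ge0.
have lo_z' : (1 - delta) * norm2 z <= delta * norm2 w by nra.
nra.
Qed.

Lemma orth_projC_bform_le (w : 'cV[R]_N) : supp w \subset S ->
  `|bform (((1%:M - P) *m Phi)^T *m ((1%:M - P) *m Phi) - 1%:M) w w|
    <= delta / (1 - delta) * sqnorm2 w.
Proof.
move=> sw; have [/andP[d0 d1] ripK] := rip.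
have [lo hi] := ripK w (l0_le_support (subset_trans sw (subsetUl S L))).
have proj_le := sqnorm2_proj_le sw.
have p0 := sqnorm2_ge0 (P *m (Phi *m w)).
have w0 := sqnorm2_ge0 w.
have hd : delta / (1 - delta) * (1 - delta) = delta by rewrite divfK // subr_eq0 gt_eqF.
rewrite bformBmx bform_gram -!sqnorm2E -mulmxA sqnorm2_orth_projC ler_norml.
by apply/andP; split; nra.
Qed.

End RestrictedIsometry.

Theorem lemma3 (R : rcfType) (M N : nat) (Phi : 'M[R]_(M, N))
    (L : {set 'I_N}) (x : 'cV[R]_N) (delta : R) (P : 'M[R]_M) :
  is_orth_proj P (subcols Phi L) ->
  supp x :&: L = set0 ->
  RIP Phi (l0 x + #|L| + 1) delta ->
  let A := (1%:M - P) *m Phi in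
  let h := A^T *m A *m x in
  forall j : 'I_N, j \notin L ->
    `|h j 0 - x j 0| <= delta / (1 - delta) * norm2 x.
Proof.
move=> projP xL rip A h j jL; have [/andP[d0 d1] _] := rip.
pose e : 'cV[R]_N := delta_mx j 0.
have supp_e : supp e \subset [set j].
  by apply/subsetP => i; rewrite !inE mxE andbT; case: (i == j); rewrite ?eqxx.
have norm_e : norm2 e = 1.
  rewrite /norm2 /sqnorm2 (bigD1 j) //= big1 => [|i /negbTE ij].
    by rewrite !mxE !eqxx expr1n addr0 sqrtr1.
  by rewrite !mxE ij mulr0n expr0n.
have SL : [disjoint supp x :|: [set j] & L].
  by rewrite -setI_eq0 setIUl xL set0U setI_eq0 disjoints1.
have card_SL : (#|supp x :|: [set j]| + #|L| <= l0 x + #|L| + 1)%N.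
  by rewrite addnAC leq_add2r -(cards1 j); exact: leq_card_setU.
have hx : h j 0 - x j 0 = bform (A^T *m A - 1%:M) x e.
  rewrite (bformC (gram_sub1_sym A)) /bform -mulmxA trmx_delta -rowE mxE.
  by rewrite mulmxBl mul1mx !mxE.
have c0 : 0 <= delta / (1 - delta) by rewrite divr_ge0 ?subr_ge0 ?ltW.
have := bform_polar_bound (gram_sub1_sym A) c0 (fun t =>
  orth_projC_bform_le rip projP SL card_SL
    (subset_trans (supp_addZ x e t) (setUS _ supp_e))).
by rewrite norm_e mulr1 -hx.
Qed.
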